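(* Let $N\geq1$, let $\mathcal{H}_{X_1},\dots,\mathcal{H}_{X_N}$ be finite-dimensional Hilbert spaces and let $\rho=|V\rangle\langle V|$ be a pure state on $\mathcal{H}_{X_1}\otimes\cdots\otimes\mathcal{H}_{X_N}$. For each $i$, let $\lambda^i_1\geq\lambda^i_2\geq\cdots$ be the eigenvalues of the reduced state $\rho_{X_i}$ in decreasing order and $|e^i_1\rangle,|e^i_2\rangle,\dots$ a corresponding orthonormal eigenbasis of $\mathcal{H}_{X_i}$ (so $\langle e^i_a|\rho_{X_i}|e^i_b\rangle=\lambda^i_a\delta_{ab}$). Write $|V\rangle=\sum_{x_1,\dots,x_N}V_{x_1\dots x_N}|e^1_{x_1}\rangle\otimes\cdots\otimes|e^N_{x_N}\rangle$, and set $\epsilon_i=1-\lambda^i_1$ and $\varepsilon=\sum_{i=1}^N\epsilon_i$. Then $$|V_{1\dots1}|^2\geq 1-\varepsilon.$$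
   Context: $\rho_{X_i}$ denotes the partial trace of $\rho$ over all tensor factors except $\mathcal{H}_{X_i}$. $V_{1\dots1}$ is the coefficient of $|e^1_1\rangle\otimes\cdots\otimes|e^N_1\rangle$. *)

From HB Require Import structures.
From mathcomp Require Import all_boot all_order all_algebra.
From mathcomp Require Import complex.
From mathcomp Require Import reals.
Set Implicit Arguments. Unset Strict Implicit. Unset Printing Implicit Defensive.
Import Order.TTheory GRing.Theory Num.Theory.
Local Open Scope ring_scope.

(* Multi-indices of the computational basis of H_{X_1} ⊗ ... ⊗ H_{X_N},
   where dim H_{X_i} = (d i).+1 (every factor has dimension >= 1). *)
Definition multi_index (N : nat) (d : 'I_N -> nat) : finType :=
  {dffun forall i : 'I_N, 'I_(d i).+1}.

(* Reduced state rho_{X_i} of the pure state |V><V| (partial trace over all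
   factors except i), as a matrix in the computational basis of H_{X_i}:
   (rho_{X_i})_{a b} = sum_{x,y : x_i = a, y_i = b, x_j = y_j (j <> i)} V_x conj(V_y). *)
Definition reduced_state (R : rcfType) (N : nat) (d : 'I_N -> nat)
  (V : multi_index d -> R[i]) (i : 'I_N) : 'M[R[i]]_((d i).+1) :=
  \matrix_(a, b)
    \sum_(x : multi_index d) \sum_(y : multi_index d)
      if [&& x i == a, y i == b & [forall j, (j != i) ==> (x j == y j :> nat)]]
      then V x * (V y)^* else 0.

(* Let P_i be the orthogonal projection onto e^i_1 in the i-th tensor factor.
   The P_i commute, <V|P_i|V> = lambda^i_1, and their product Q is the projection
   onto e^1_1 (x) ... (x) e^N_1, so <V|Q|V> = |V_{1...1}|^2.  For commuting
   projections 1 - Q <= sum_i (1 - P_i): by induction, since for commuting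
   projections A, B we have B - AB = B(1 - A)B <= 1 - A.  Taking expectations
   in V gives 1 - |V_{1...1}|^2 <= sum_i (1 - lambda^i_1). *)

From HB Require Import structures.
From mathcomp Require Import all_boot all_order all_algebra.
From mathcomp Require Import complex reals ring.
From Stdlib Require Import FunctionalExtensionality.
Set Implicit Arguments. Unset Strict Implicit. Unset Printing Implicit Defensive.
Import Order.TTheory GRing.Theory Num.Theory.
Local Open Scope ring_scope.

Section OrthogonalProjections.
Variables (C : numClosedFieldType) (T : finType).
Implicit Types (f g h v : T -> C) (A B : (T -> C) -> T -> C).

Definition dotf f g : C := \sum_x f x * (g x)^*.

Lemma dotfBl f g h : dotf (f \- g) h = dotf f h - dotf g h.
Proof. by rewrite /dotf -sumrB; apply: eq_bigr => x _; rewrite mulrBl. Qed.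

Lemma dotfBr f g h : dotf h (f \- g) = dotf h f - dotf h g.
Proof. by rewrite /dotf -sumrB; apply: eq_bigr => x _; rewrite rmorphB mulrBr. Qed.

Lemma dotf_ge0 f : 0 <= dotf f f.
Proof. by apply: sumr_ge0 => x _; apply: mul_conjC_ge0. Qed.

Definition orthoproj A :=
  [/\ forall f g, dotf (A f) g = dotf f (A g),
      forall f, A (A f) = A f
    & forall f g, A (f \- g) = A f \- A g].

Lemma orthoproj_dotE A f : orthoproj A -> dotf (A f) f = dotf (A f) (A f).
Proof. by case=> selfadj idem _; rewrite -{1}idem selfadj. Qed.

Lemma orthoproj_pythagoras A f : orthoproj A ->
  dotf f f - dotf (A f) (A f) = dotf (f \- A f) (f \- A f).
Proof.
move=> pA; have AfE := orthoproj_dotE f pA.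
have fAE : dotf f (A f) = dotf (A f) (A f) by case: pA => <-.
by rewrite dotfBl !dotfBr AfE fAE subrr subr0.
Qed.

Lemma orthoproj_dot_le A f : orthoproj A -> dotf (A f) (A f) <= dotf f f.
Proof. by move=> pA; rewrite -subr_ge0 orthoproj_pythagoras //; apply: dotf_ge0. Qed.

Lemma orthoproj_comp A B : orthoproj A -> orthoproj B ->
  (forall f, A (B f) = B (A f)) -> orthoproj (A \o B).
Proof.
case=> saA idA adA [saB idB adB] cAB; split => /= [f g|f|f g].
- by rewrite saA saB cAB.
- by rewrite cAB idA -cAB idB.
- by rewrite adB adA.
Qed.

Lemma orthoproj_comp_defect A B v : orthoproj A -> orthoproj B ->
  (forall f, A (B f) = B (A f)) ->
  dotf (B v) v - dotf (A (B v)) v <= dotf v v - dotf (A v) v.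
Proof.
move=> pA pB cAB; have pAB := orthoproj_comp pA pB cAB.
rewrite (orthoproj_dotE v pB) (orthoproj_dotE v pAB) (orthoproj_dotE v pA) /=.
rewrite !orthoproj_pythagoras //.
have -> : B v \- A (B v) = B (v \- A v) by case: pB => _ _ ->; rewrite cAB.
exact: orthoproj_dot_le.
Qed.

Variables (I : Type) (P : I -> (T -> C) -> T -> C).
Hypotheses (P_orthoproj : forall i, orthoproj (P i))
           (P_comm : forall i j f, P i (P j f) = P j (P i f)).

Definition orthoproj_prod (s : seq I) : (T -> C) -> T -> C :=
  foldr (fun i Q => P i \o Q) id s.

Lemma orthoproj_prod_comm s j f :
  P j (orthoproj_prod s f) = orthoproj_prod s (P j f).
Proof. by elim: s => //= i s IH; rewrite P_comm IH. Qed.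

Lemma orthoproj_prod_orthoproj s : orthoproj (orthoproj_prod s).
Proof.
elim: s => [|i s pQ] /=.
  by split=> // f g; apply: functional_extensionality.
by apply: orthoproj_comp => // f; rewrite orthoproj_prod_comm.
Qed.

Lemma orthoproj_prod_union_bound s v :
  dotf v v - dotf (orthoproj_prod s v) v
    <= \sum_(i <- s) (dotf v v - dotf (P i v) v).
Proof.
elim: s => [|i s IH]; first by rewrite big_nil /= subrr.
rewrite big_cons /= -[X in X <= _](subrKA (dotf (orthoproj_prod s v) v)).
rewrite addrC lerD //.
apply: orthoproj_comp_defect => //; first exact: orthoproj_prod_orthoproj.
by move=> f; rewrite orthoproj_prod_comm.
Qed.

End OrthogonalProjections.

Definition upd (N : nat) (d : 'I_N -> nat) (x : multi_index d) (i : 'I_N)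
    (k : 'I_(d i).+1) : multi_index d :=
  finfun (dfwith (fun j => x j) k).
Arguments upd {N d} x i k.

Section MultiIndex.
Variables (N : nat) (d : 'I_N -> nat).
Implicit Types (x y z : multi_index d) (i j : 'I_N).

Lemma upd_same x i k : upd x i k i = k.
Proof. by rewrite ffunE dfwith_in. Qed.

Lemma upd_other x i j k : i != j -> upd x i k j = x j.
Proof. by move=> ij; rewrite ffunE dfwith_out. Qed.

Lemma upd_upd x i k l : upd (upd x i k) i l = upd x i l.
Proof.
apply/ffunP => j; have [<-|ij] := eqVneq i j; first by rewrite !upd_same.
by rewrite !upd_other.
Qed.

Lemma upd_id x i : upd x i (x i) = x.
Proof.
apply/ffunP => j; have [<-|ij] := eqVneq i j; first by rewrite upd_same.
by rewrite upd_other.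
Qed.

Lemma updC x i j k l : i != j -> upd (upd x i k) j l = upd (upd x j l) i k.
Proof.
move=> ij; apply/ffunP => m; have [<-|jm] := eqVneq j m.
  by rewrite upd_same upd_other // upd_same.
rewrite upd_other //; have [<-|im] := eqVneq i m; first by rewrite !upd_same.
by rewrite !upd_other.
Qed.

Lemma eq_upd x y i k : (x == upd y i k) = (x i == k) && (x == upd y i (x i)).
Proof.
apply/eqP/andP => [->|[/eqP <- /eqP //]].
by rewrite upd_same !eqxx.
Qed.

Lemma agree_off_upd x y i :
  [forall j, (j != i) ==> (x j == y j :> nat)] = (x == upd y i (x i)).
Proof.
apply/forallP/eqP => [agree|->]; last first.
  by move=> j; apply/implyP => ji; rewrite upd_other // eq_sym.
apply/ffunP => j; have [<-|ij] := eqVneq i j; first by rewrite upd_same.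
by rewrite upd_other //; apply/val_inj/eqP; have := agree j; rewrite eq_sym ij.
Qed.

Lemma sum_upd_swap (V : nmodType) i (F : multi_index d -> 'I_(d i).+1 -> V) :
  \sum_x \sum_k F x k = \sum_x \sum_k F (upd x i k) (x i).
Proof.
rewrite !pair_bigA /=.
pose h (p : multi_index d * 'I_(d i).+1) := (upd p.1 i p.2, p.1 i).
have hK : involutive h by case=> x k; rewrite /h /= upd_upd upd_id upd_same.
by rewrite (reindex_inj (inv_inj hK)).
Qed.

End MultiIndex.

Lemma reduced_stateE (R : rcfType) (N : nat) (d : 'I_N -> nat)
    (V : multi_index d -> R[i]) (i : 'I_N) k l :
  reduced_state V i k l =
  \sum_(y : multi_index d) (if y i == l then V (upd y i k) * (V y)^* else 0).
Proof.
rewrite mxE exchange_big; apply: eq_bigr => y _ /=.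
have [_|_] := eqVneq (y i) l; last by rewrite big1 // => x _; rewrite andbF.
under eq_bigr => x _ do rewrite agree_off_upd -eq_upd.
by rewrite -big_mkcond big_pred1_eq.
Qed.

Section FactorProjection.
Variables (C : numClosedFieldType) (N : nat) (d : 'I_N -> nat).
Variable u : forall i : 'I_N, 'I_(d i).+1 -> C.
Arguments u : clear implicits.
Implicit Types (f : multi_index d -> C) (x y z : multi_index d) (i j : 'I_N).

(* [|u_i><u_i|] acting on the [i]-th tensor factor. *)
Definition factor_proj i f : multi_index d -> C :=
  fun x => u i (x i) * \sum_k (u i k)^* * f (upd x i k).

Lemma factor_proj_orthoproj i :
  \sum_k (u i k)^* * u i k = 1 -> orthoproj (factor_proj i).
Proof.
move=> unit_u; split=> [f g|f|f g]; rewrite /factor_proj.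
- rewrite /dotf; under eq_bigr => x _ do rewrite big_distrr big_distrl /=.
  rewrite (sum_upd_swap (i := i)); apply: eq_bigr => x _.
  rewrite rmorphM rmorph_sum !big_distrr /=; apply: eq_bigr => k _.
  by rewrite upd_same upd_upd upd_id rmorphM /= conjCK; ring.
- apply: functional_extensionality => x.
  under eq_bigr => k _ do under eq_bigr => l _ do rewrite upd_upd.
  under eq_bigr => k _ do rewrite upd_same mulrA.
  by rewrite -big_distrl /= unit_u mul1r.
- apply: functional_extensionality => x; rewrite /= -mulrBr -sumrB.
  by congr (_ * _); apply: eq_bigr => k _; rewrite mulrBr.
Qed.

Lemma factor_projC i j f :
  factor_proj i (factor_proj j f) = factor_proj j (factor_proj i f).
Proof.
have [->//|ij] := eqVneq i j; have ji : j != i by rewrite eq_sym.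
apply: functional_extensionality => x; rewrite /factor_proj.
transitivity (\sum_k \sum_l u i (x i) * u j (x j) *
  ((u i k)^* * (u j l)^*) * f (upd (upd x i k) j l)).
  rewrite big_distrr; apply: eq_bigr => k _ /=.
  by rewrite upd_other // !big_distrr; apply: eq_bigr => l _ /=; ring.
rewrite exchange_big big_distrr; apply: eq_bigr => l _ /=.
rewrite upd_other // !big_distrr; apply: eq_bigr => k _ /=.
by rewrite updC //; ring.
Qed.

Definition contract (s : seq 'I_N) f x : C :=
  \sum_(z : multi_index d)
    if [forall j, (j \notin s) ==> (z j == x j)]
    then (\prod_(i <- s) (u i (z i))^*) * f z else 0.

Lemma contract_nil f : contract [::] f = f.
Proof.
apply: functional_extensionality => x; rewrite /contract.
under eq_bigr => z _ do rewrite big_nil mul1r.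
rewrite (bigD1 x) //= big1 ?addr0; last first.
  move=> z /eqP zx; case: forallP => // agree; case: zx.
  by apply/ffunP => j; apply/eqP/agree.
by case: forallP => // -[j]; rewrite eqxx.
Qed.

Lemma agree_outside_upd (s : seq 'I_N) x z i k : i \notin s ->
  [forall j, (j \notin s) ==> (z j == upd x i k j)] =
  (z i == k) && [forall j, (j \notin i :: s) ==> (z j == x j)].
Proof.
move=> i_s; apply/forallP/andP => [agree|[/eqP zk /forallP agree] j].
  split; first by have := agree i; rewrite i_s upd_same.
  apply/forallP => j; apply/implyP; rewrite inE negb_or => /andP[ji j_s].
  by have := agree j; rewrite j_s upd_other // eq_sym.
apply/implyP => j_s; have [<-|ij] := eqVneq i j; first by rewrite upd_same zk.
by have := agree j; rewrite inE negb_or j_s eq_sym ij upd_other.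
Qed.

Lemma contract_cons i s f x : i \notin s ->
  contract (i :: s) f x = \sum_k (u i k)^* * contract s f (upd x i k).
Proof.
move=> i_s; rewrite /contract.
under [RHS]eq_bigr => k _ do rewrite big_distrr /=.
rewrite [RHS]exchange_big; apply: eq_bigr => z _ /=.
under [RHS]eq_bigr => k _ do rewrite agree_outside_upd //.
case: [forall j, _]; last by rewrite big1 // => k _; rewrite andbF mulr0.
under [RHS]eq_bigr => k _ do rewrite andbT -mulrb mulrnAr mulrb.
rewrite -big_mkcond (big_pred1 (z i)) => [|k]; last by rewrite /= eq_sym.
by rewrite big_cons mulrA.
Qed.

Lemma orthoproj_prod_factor_projE s f : uniq s ->
  orthoproj_prod factor_proj s f =
  fun x => (\prod_(i <- s) u i (x i)) * contract s f x.
Proof.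
elim: s => [_|i s IH /= /andP[i_s /IH ->]].
  by apply: functional_extensionality => x; rewrite big_nil mul1r contract_nil.
apply: functional_extensionality => x; rewrite /factor_proj big_cons contract_cons //.
rewrite -mulrA; congr (_ * _); rewrite big_distrr /=; apply: eq_bigr => k _.
rewrite (eq_big_seq (fun j => u j (x j))) => [|j j_s]; first exact: mulrCA.
by rewrite upd_other //; apply: contraNneq i_s => ->.
Qed.

Lemma dotf_orthoproj_prod_factor_proj f :
  dotf (orthoproj_prod factor_proj (index_enum 'I_N) f) f =
  `|\sum_(z : multi_index d) (\prod_(i : 'I_N) (u i (z i))^*) * f z| ^+ 2.
Proof.
set c := \sum_(z : multi_index d) _.
have contractE x : contract (index_enum 'I_N) f x = c.
  apply: eq_bigr => z _; case: forallP => // -[j].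
  by rewrite mem_index_enum.
rewrite orthoproj_prod_factor_projE ?index_enum_uniq // normCK /dotf.
rewrite {2}/c rmorph_sum big_distrr; apply: eq_bigr => x _ /=.
rewrite contractE rmorphM rmorph_prod /=.
under [in RHS]eq_bigr => i _ do rewrite conjCK.
by ring.
Qed.

End FactorProjection.

Lemma dotf_factor_proj (R : rcfType) (N : nat) (d : 'I_N -> nat)
    (u : forall i : 'I_N, 'I_(d i).+1 -> R[i]) (V : multi_index d -> R[i]) i :
  dotf (factor_proj u i V) V =
  \sum_k \sum_l (u i k)^* * reduced_state V i k l * u i l.
Proof.
under [RHS]eq_bigr => k _ do under eq_bigr => l _ do
  rewrite reduced_stateE big_distrr big_distrl /=.
under [RHS]eq_bigr => k _ do rewrite exchange_big.
rewrite [RHS]exchange_big /dotf; apply: eq_bigr => y _ /=.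
rewrite /factor_proj big_distrr big_distrl /=; apply: eq_bigr => k _ /=.
rewrite (bigD1 (y i)) //= eqxx big1 ?addr0; first by ring.
by move=> l /negbTE; rewrite eq_sym => ->; rewrite mulr0 mul0r.
Qed.

Theorem lemma1 (R : realType) (N : nat) (d : 'I_N -> nat)
  (V : multi_index d -> R[i])
  (e : forall i : 'I_N, 'M[R[i]]_((d i).+1))
  (lam : forall i : 'I_N, 'I_(d i).+1 -> R) :
  (0 < N)%N ->
  (* rho = |V><V| is a (normalized) pure state *)
  \sum_(x : multi_index d) `|V x| ^+ 2 = 1 ->
  (* the columns e i _ a = |e^i_a> form an orthonormal basis of H_{X_i} *)
  (forall (i : 'I_N) (a b : 'I_(d i).+1),
      \sum_(k : 'I_(d i).+1) (e i k a)^* * e i k b = (a == b)%:R) ->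
  (* <e^i_a| rho_{X_i} |e^i_b> = lam^i_a delta_ab *)
  (forall (i : 'I_N) (a b : 'I_(d i).+1),
      \sum_(k : 'I_(d i).+1) \sum_(l : 'I_(d i).+1)
        (e i k a)^* * reduced_state V i k l * e i l b
      = (a == b)%:R * ((lam i a)%:C)%C) ->
  (* eigenvalues in decreasing order *)
  (forall (i : 'I_N) (a b : 'I_(d i).+1), (a <= b)%N -> lam i b <= lam i a) ->
  let V1 := \sum_(x : multi_index d)
              (\prod_(i : 'I_N) (e i (x i) ord0)^*) * V x in
  let eps := \sum_(i : 'I_N) (1 - lam i ord0) in
  ((1 - eps)%:C)%C <= `|V1| ^+ 2.
Proof.
move=> _ normV ortho diag _; cbv zeta.
rewrite rmorphB rmorph1 rmorph_sum lerBlDr addrC -lerBlDr.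
pose u i k := e i k ord0.
have u_unit i : \sum_k (u i k)^* * u i k = 1 by rewrite ortho eqxx.
have dotVV : dotf V V = 1.
  by rewrite -normV; apply: eq_bigr => x _; rewrite normCK.
have defect i : dotf V V - dotf (factor_proj u i V) V = ((1 - lam i ord0)%:C)%C.
  by rewrite dotVV dotf_factor_proj diag eqxx mul1r rmorphB rmorph1.
have := orthoproj_prod_union_bound (fun i => factor_proj_orthoproj (u_unit i))
  (@factor_projC _ _ _ u) (index_enum 'I_N) V.
by rewrite (eq_bigr _ (fun i _ => defect i)) dotVV dotf_orthoproj_prod_factor_proj.
Qed.
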